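(* Let $\mathcal{G}$ be a tomographically local GPT and let $M:\mathcal{G}\to\mathbf{RLinear}$ be a diagram-preserving, convex-linear and empirically adequate map. Suppose that for each system $A$ of $\mathcal{G}$, $\chi_A:A\to M(A)$ is a linear map satisfying $\chi_A\circ\rho=M(\rho)$ for every state $\rho$ of $A$ (states being linear maps $\mathbb{R}\to A$). Then for all systems $A,B$, $$\chi_{A\otimes B}=\chi_A\otimes\chi_B.$$
   Context: A process theory consists of systems (closed under a composition $A\otimes B$, with a trivial system $I$) and processes $T:A\to B$, closed under sequential composition $\circ$ and parallel composition $\otimes$ and containing identities; processes $I\to A$ are states, $A\to I$ effects, $I\to I$ scalars. $\mathbf{RLinear}$ is the process theory of finite-dimensional real vector spaces (composite $=$ tensor product, trivial system $\mathbb{R}$) and linear maps, with $\circ$ composition and $\otimes$ tensor product of maps. A tomographically local GPT is here a sub-process theory $\mathcal{G}$ of $\mathbf{RLinear}$ (closed under $\circ$, $\otimes$, containing identities) such that: each system $A$ is a finite-dimensional real vector space and the composite of $A$ and $B$ is $A\otimes B$; the states of $A$ span $A$ and the effects on $A$ span $A^*$; every scalar lies in $[0,1]$; for each type the set of processes is closed under convex combinations; each system $A$ has a distinguished deterministic effect $u_A$ with $u_{A\otimes B}=u_A\otimes u_B$. A map $M:\mathcal{G}\to\mathbf{RLinear}$ is diagram-preserving if it assigns to each system $A$ a vector space $M(A)$, with $M(A\otimes B)=M(A)\otimes M(B)$, $M(I)=\mathbb{R}$, and to each process $T:A\to B$ a linear map $M(T):M(A)\to M(B)$, such that $M(T'\circ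 T)=M(T')\circ M(T)$, $M(T\otimes T')=M(T)\otimes M(T')$, $M(\mathrm{id}_A)=\mathrm{id}_{M(A)}$. It is convex-linear if it preserves convex combinations of processes of the same type and coarse-grainings (sums) of effects whenever these relations hold in $\mathcal{G}$. It is empirically adequate if $M(s)=s$ for every scalar $s$. *)

From HB Require Import structures.
From mathcomp Require Import all_boot all_order all_algebra.
From mathcomp Require Import reals.
From mathcomp Require Import mxtens.

Set Implicit Arguments.
Unset Strict Implicit.
Unset Printing Implicit Defensive.

Import Order.TTheory GRing.Theory Num.Theory.
Local Open Scope ring_scope.

(* Finite-dimensional real vector spaces are represented in coordinates:
   a system A is the space R^(sdim A) (column vectors), a linear map A -> B is
   a matrix 'M_(sdim B, sdim A), sequential composition T' o T is T' *m T,
   and the tensor product of spaces/maps is the Kronecker product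
   (tensmx, row-major index convention), identified with the composite system
   via the dimension equation sdim (A (x) B) = sdim A * sdim B. *)

(* The data of a sub-process theory of RLinear whose systems are f.d. real
   vector spaces, with composite = tensor product and trivial system R. *)
Record GPT (R : realType) := {
  sys : Type;
  stens : sys -> sys -> sys;
  sunit : sys;
  sdim : sys -> nat;
  dim_tens : forall A B, sdim (stens A B) = (sdim A * sdim B)%N;
  dim_unit : sdim sunit = 1%N;
  (* RLinear is treated as a strict monoidal category *)
  stensA : forall A B C, stens (stens A B) C = stens A (stens B C);
  stens1l : forall A, stens sunit A = A;
  stens1r : forall A, stens A sunit = A;
  proc : forall A B : sys, 'M[R]_(sdim B, sdim A) -> Prop
}.

Arguments sys {R}.
Arguments stens {R g}.
Arguments sunit {R g}.
Arguments sdim {R g}.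
Arguments dim_tens {R g}.
Arguments dim_unit {R g}.
Arguments stens1l {R g}.
Arguments proc {R g A B}.

Section Defs.
Variables (R : realType) (G : GPT R).

Definition gtens {A B A' B' : sys G}
  (T : 'M[R]_(sdim B, sdim A)) (T' : 'M[R]_(sdim B', sdim A')) :
  'M[R]_(sdim (stens B B'), sdim (stens A A')) :=
  castmx (esym (dim_tens B B'), esym (dim_tens A A')) (T *t T').

Definition process_theory : Prop :=
  [/\ (forall A : sys G, proc (1%:M : 'M[R]_(sdim A))),
      (forall (A B C : sys G) (T : 'M[R]_(sdim B, sdim A)) (T' : 'M[R]_(sdim C, sdim B)),
          proc T -> proc T' -> proc (T' *m T)) &
      (forall (A B A' B' : sys G) (T : 'M[R]_(sdim B, sdim A))
              (T' : 'M[R]_(sdim B', sdim A')),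
          proc T -> proc T' -> proc (gtens T T'))].

Definition states_span : Prop :=
  forall (A : sys G) (v : 'M[R]_(sdim A, sdim (@sunit R G))),
    exists (n : nat) (c : 'I_n -> R) (s : 'I_n -> 'M[R]_(sdim A, sdim (@sunit R G))),
      (forall i, proc (s i)) /\ v = \sum_(i < n) c i *: s i.

Definition effects_span : Prop :=
  forall (A : sys G) (v : 'M[R]_(sdim (@sunit R G), sdim A)),
    exists (n : nat) (c : 'I_n -> R) (e : 'I_n -> 'M[R]_(sdim (@sunit R G), sdim A)),
      (forall i, proc (e i)) /\ v = \sum_(i < n) c i *: e i.

Definition scalars_in_01 : Prop :=
  forall s : 'M[R]_(sdim (@sunit R G), sdim (@sunit R G)),
    proc s -> forall i j, 0 <= s i j <= 1.

Definition convex_closed : Prop :=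
  forall (A B : sys G) (T1 T2 : 'M[R]_(sdim B, sdim A)) (p : R),
    proc T1 -> proc T2 -> 0 <= p <= 1 -> proc (p *: T1 + (1 - p) *: T2).

Definition dim_unit2 : sdim (stens (@sunit R G) sunit) = sdim (@sunit R G) :=
  f_equal sdim (stens1l sunit).

Definition deterministic_effects : Prop :=
  exists u : forall A : sys G, 'M[R]_(sdim (@sunit R G), sdim A),
    (forall A, proc (u A)) /\
    (forall A B, u (stens A B) = castmx (dim_unit2, erefl) (gtens (u A) (u B))).

Definition tomo_local_GPT : Prop :=
  [/\ process_theory, states_span, effects_span, scalars_in_01 &
      convex_closed /\ deterministic_effects].

End Defs.

Record gmap (R : realType) (G : GPT R) := {
  mdim : sys G -> nat;
  mdim_tens : forall A B, mdim (stens A B) = (mdim A * mdim B)%N;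
  mdim_unit : mdim sunit = 1%N;
  mproc : forall A B : sys G, 'M[R]_(sdim B, sdim A) -> 'M[R]_(mdim B, mdim A)
}.

Arguments mdim {R G}.
Arguments mdim_tens {R G}.
Arguments mdim_unit {R G}.
Arguments mproc {R G} _ {A B}.

Section MapDefs.
Variables (R : realType) (G : GPT R) (M : gmap G).

Definition mtens {A B A' B' : sys G}
  (X : 'M[R]_(mdim M B, mdim M A)) (Y : 'M[R]_(mdim M B', mdim M A')) :
  'M[R]_(mdim M (stens B B'), mdim M (stens A A')) :=
  castmx (esym (mdim_tens M B B'), esym (mdim_tens M A A')) (X *t Y).

Definition diagram_preserving : Prop :=
  [/\ (forall (A B C : sys G) (T : 'M[R]_(sdim B, sdim A)) (T' : 'M[R]_(sdim C, sdim B)),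
          proc T -> proc T' -> mproc M (T' *m T) = mproc M T' *m mproc M T),
      (forall (A B A' B' : sys G) (T : 'M[R]_(sdim B, sdim A))
              (T' : 'M[R]_(sdim B', sdim A')),
          proc T -> proc T' -> mproc M (gtens T T') = mtens (mproc M T) (mproc M T')) &
      (forall A : sys G, mproc M (1%:M : 'M[R]_(sdim A)) = 1%:M)].

Definition convex_linear : Prop :=
  (forall (A B : sys G) (T1 T2 : 'M[R]_(sdim B, sdim A)) (p : R),
      proc T1 -> proc T2 -> 0 <= p <= 1 ->
      mproc M (p *: T1 + (1 - p) *: T2) = p *: mproc M T1 + (1 - p) *: mproc M T2)
  /\
  (forall (A : sys G) (e1 e2 : 'M[R]_(sdim (@sunit R G), sdim A)),
      proc e1 -> proc e2 -> proc (e1 + e2) ->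
      mproc M (e1 + e2) = mproc M e1 + mproc M e2).

Definition mdim_unit_eq : mdim M (@sunit R G) = sdim (@sunit R G) :=
  etrans (mdim_unit M) (esym (dim_unit)).

Definition empirically_adequate : Prop :=
  forall s : 'M[R]_(sdim (@sunit R G), sdim (@sunit R G)),
    proc s -> castmx (mdim_unit_eq, mdim_unit_eq) (mproc M s) = s.

End MapDefs.

From mathcomp Require Import all_boot all_algebra.
From mathcomp Require Import reals.
From mathcomp Require Import mxtens.

Set Implicit Arguments.
Unset Strict Implicit.
Unset Printing Implicit Defensive.

Import GRing.Theory.
Local Open Scope ring_scope.

(* Both chi (A (x) B) and chi A (x) chi B send a product state rho (x) sigma to
   M(rho (x) sigma) = M(rho) (x) M(sigma): for the first this is the hypothesis on
   chi, because rho (x) sigma is again a state, and for the second it follows from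
   chi A rho = M(rho), chi B sigma = M(sigma) and diagram preservation.  Since states
   span each system, product states span A (x) B (tomographic locality), so the two
   linear maps agree.  Only closure of processes under (x), spanning by states and
   preservation of (x) by M are needed. *)

Lemma castmx_irrelevance (T : Type) m n m' n' (e1 e2 : m = m') (f1 f2 : n = n')
    (X : 'M[T]_(m, n)) :
  castmx (e1, f1) X = castmx (e2, f2) X.
Proof. by rewrite (eq_irrelevance e1 e2) (eq_irrelevance f1 f2). Qed.

Section TensorProducts.
Variable R : comPzRingType.

Lemma castmx_tensmx m n p q m' n' p' q' (e1 : m = m') (e2 : n = n') (e3 : p = p')
    (e4 : q = q') (e5 : (m * p = m' * p')%N) (e6 : (n * q = n' * q')%N)
    (A : 'M[R]_(m, n)) (B : 'M[R]_(p, q)) :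
  castmx (e1, e2) A *t castmx (e3, e4) B = castmx (e5, e6) (A *t B).
Proof.
case: m' / e1 in e5 *; case: n' / e2 in e6 *; case: p' / e3 in e5 *.
by case: q' / e4 in e6 *; rewrite !castmx_id.
Qed.

Lemma mulmx_castmx_l m m' n p (e : m = m') (X : 'M[R]_(m, n)) (Z : 'M[R]_(n, p)) :
  castmx (e, erefl) X *m Z = castmx (e, erefl) (X *m Z).
Proof. by case: m' / e. Qed.

Lemma mulmx_castmx_r m n p p' (e : p = p') (X : 'M[R]_(m, n)) (Z : 'M[R]_(n, p)) :
  X *m castmx (erefl, e) Z = castmx (erefl, e) (X *m Z).
Proof. by case: p' / e. Qed.

Lemma tensmx_sumZl m n p q k (c : 'I_k -> R) (s : 'I_k -> 'M[R]_(m, n))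
    (w : 'M[R]_(p, q)) :
  (\sum_(i < k) c i *: s i) *t w = \sum_(i < k) c i *: (s i *t w).
Proof.
apply/matrixP => x y; rewrite !mxE !summxE mulr_suml.
by apply: eq_bigr => i _; rewrite !mxE mulrA.
Qed.

Lemma tensmx_sumZr m n p q k (c : 'I_k -> R) (s : 'I_k -> 'M[R]_(m, n))
    (w : 'M[R]_(p, q)) :
  w *t (\sum_(i < k) c i *: s i) = \sum_(i < k) c i *: (w *t s i).
Proof.
apply/matrixP => x y; rewrite !mxE !summxE mulr_sumr.
by apply: eq_bigr => i _; rewrite !mxE mulrCA.
Qed.

Lemma tensmx_delta m n p q (i : 'I_m) (k : 'I_n) (j : 'I_p) (l : 'I_q) :
  delta_mx i k *t delta_mx j l =
  delta_mx (mxtens_index (i, j)) (mxtens_index (k, l)) :> 'M[R]_(_, _).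
Proof.
apply/matrixP => x y.
case: (mxtens_indexP x) => i' j'; case: (mxtens_indexP y) => k' l'.
rewrite tensmxE !mxE !(can_eq (@mxtens_indexK _ _)) !xpair_eqE.
by case: (i' == i); case: (k' == k); case: (j' == j); case: (l' == l);
  rewrite ?mulr1 ?mulr0 ?mul0r.
Qed.

Lemma mulmx_delta_mxE r m n (X : 'M[R]_(r, m)) x (y : 'I_m) (z : 'I_n) :
  (X *m delta_mx y z) x z = X x y.
Proof.
rewrite mxE (bigD1 y) //= big1 => [|w /negbTE wy]; last by rewrite mxE wy mulr0.
by rewrite addr0 mxE !eqxx mulr1.
Qed.

Lemma eq_mx_on_tensmx r m n p q (k : 'I_p) (l : 'I_q) (X Y : 'M[R]_(r, m * n)) :
    (forall (v : 'M_(m, p)) (w : 'M_(n, q)), X *m (v *t w) = Y *m (v *t w)) ->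
  X = Y.
Proof.
move=> XY; apply/matrixP => x y; case: (mxtens_indexP y) => i j.
have /matrixP/(_ x (mxtens_index (k, l))) := XY (delta_mx i k) (delta_mx j l).
by rewrite tensmx_delta !mulmx_delta_mxE.
Qed.

Definition spanned m n (P : 'M[R]_(m, n) -> Prop) :=
  forall v, exists k (c : 'I_k -> R) (s : 'I_k -> 'M[R]_(m, n)),
    (forall i, P (s i)) /\ v = \sum_(i < k) c i *: s i.

Lemma eq_mx_on_tensmx_span r m n p q (k : 'I_p) (l : 'I_q)
    (P : 'M_(m, p) -> Prop) (Q : 'M_(n, q) -> Prop) (X Y : 'M[R]_(r, m * n)) :
    spanned P -> spanned Q ->
    (forall v w, P v -> Q w -> X *m (v *t w) = Y *m (v *t w)) ->
  X = Y.
Proof.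
move=> spanP spanQ XY; apply: (eq_mx_on_tensmx k l) => v w.
have [a [c [s [Ps ->]]]] := spanP v; have [b [d [t [Qt ->]]]] := spanQ w.
rewrite tensmx_sumZl !mulmx_sumr; apply: eq_bigr => i _.
rewrite tensmx_sumZr -!scalemxAr !mulmx_sumr; congr (_ *: _).
by apply: eq_bigr => j _; rewrite -!scalemxAr XY.
Qed.

End TensorProducts.

Section ProductStates.
Variables (R : realType) (G : GPT R) (M : gmap G).

Hypothesis proc_gtens : forall (A B A' B' : sys G) (T : 'M[R]_(sdim B, sdim A))
    (T' : 'M[R]_(sdim B', sdim A')),
  proc T -> proc T' -> proc (gtens T T').

Hypothesis mproc_gtens : forall (A B A' B' : sys G) (T : 'M[R]_(sdim B, sdim A))
    (T' : 'M[R]_(sdim B', sdim A')),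
  proc T -> proc T' -> mproc M (gtens T T') = mtens (mproc M T) (mproc M T').

Variable chi : forall A : sys G, 'M[R]_(mdim M A, sdim A).

Hypothesis chi_state : forall (A : sys G) (rho : 'M[R]_(sdim A, sdim (@sunit R G))),
  proc rho -> chi A *m rho = castmx (erefl, mdim_unit_eq M) (mproc M rho).

Lemma mproc_state (A : sys G) (rho : 'M[R]_(sdim A, sdim (@sunit R G))) :
  proc rho -> mproc M rho = castmx (erefl, esym (mdim_unit_eq M)) (chi A *m rho).
Proof.
by move=> rho_state; rewrite chi_state // castmx_comp castmx_irrelevance castmx_id.
Qed.

(* A tensor product of two states has input I (x) I, which is only equal to I. *)
Lemma chi_state_cast (A X : sys G) (e : sunit = X) (rho : 'M[R]_(sdim A, sdim X))
    (e1 : sdim X = sdim (@sunit R G)) (e2 : mdim M X = sdim (@sunit R G)) :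
  proc rho -> chi A *m castmx (erefl, e1) rho = castmx (erefl, e2) (mproc M rho).
Proof.
case: X / e in rho e1 e2 *; rewrite (castmx_irrelevance _ erefl _ erefl) castmx_id.
by rewrite (castmx_irrelevance _ erefl _ (mdim_unit_eq M)); apply: chi_state.
Qed.

Lemma chi_tens_product_state (A B : sys G) (rho : 'M[R]_(sdim A, sdim (@sunit R G)))
    (sigma : 'M[R]_(sdim B, sdim (@sunit R G))) :
    proc rho -> proc sigma ->
  castmx (erefl, dim_tens A B) (chi (stens A B)) *m (rho *t sigma) =
  castmx (esym (mdim_tens M A B), erefl) (chi A *t chi B) *m (rho *t sigma).
Proof.
move=> rho_state sigma_state.
have mdim_unit2 : mdim M (stens sunit sunit) = sdim (@sunit R G).
  by rewrite stens1l (mdim_unit_eq M).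
have := chi_state_cast (esym (stens1l sunit)) (dim_unit2 G) mdim_unit2
  (proc_gtens rho_state sigma_state).
rewrite mproc_gtens // /mtens (mproc_state rho_state) (mproc_state sigma_state).
have mdim_unit_sq : (sdim (@sunit R G) * sdim (@sunit R G) =
                     mdim M sunit * mdim M sunit)%N by rewrite (mdim_unit_eq M).
rewrite (castmx_tensmx _ _ _ _ erefl mdim_unit_sq) -tensmx_mul !castmx_comp /gtens.
rewrite mulmx_cast mulmx_castmx_r => /castmx_sym; rewrite castmx_comp => WZ.
rewrite mulmx_castmx_l WZ castmx_comp (castmx_irrelevance _ erefl _ erefl) castmx_id.
by congr (_ *m _); apply: castmx_irrelevance.
Qed.

End ProductStates.

Theorem proposition4 (R : realType) (G : GPT R) (M : gmap G) :
  tomo_local_GPT G ->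
  diagram_preserving M -> convex_linear M -> empirically_adequate M ->
  forall chi : forall A : sys G, 'M[R]_(mdim M A, sdim A),
    (forall (A : sys G) (rho : 'M[R]_(sdim A, sdim (@sunit R G))),
        proc rho -> chi A *m rho = castmx (erefl, mdim_unit_eq M) (mproc M rho)) ->
    forall A B : sys G,
      chi (stens A B) =
      castmx (esym (mdim_tens M A B), esym (dim_tens A B)) (chi A *t chi B).
Proof.
move=> [[_ _ proc_gtens] states_span _ _ _] [_ mproc_gtens _] _ _ chi chi_state A B.
pose k0 : 'I_(sdim (@sunit R G)) := cast_ord (esym dim_unit) ord0.
have := eq_mx_on_tensmx_span k0 k0 (states_span A) (states_span B)
  (chi_tens_product_state proc_gtens mproc_gtens chi_state (A := A) (B := B)).
move=> /esym/castmx_sym ->.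
by rewrite castmx_comp; apply: castmx_irrelevance.
Qed.
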